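(* Let $\langle B,\wedge,{}'\rangle$ be an algebra with $\wedge$ binary and ${}'$ unary satisfying $x\wedge(y\wedge z)\approx y\wedge(z\wedge x)$ and $x\approx (x'\wedge y)'\wedge(x'\wedge y')'$. Then $x''=x$ for all $x\in B$. *)

(* Under the Huntington equation x = (x'∧y)'∧(x'∧y')', the cyclic law already
   forces commutativity: if x = p∧q, rotating x∧(p∧v) shows that p commutes with
   x "around" any v, and every element is of the form p∧r with p = (x'∧y)' for a
   suitable y.  Commutativity and the cyclic law give associativity, and in a
   commutative semigroup Huntington's equation yields x'∧x'' = x'∧x, from which
   x'' = x follows by comparing two instances of the equation. *)

From Stdlib Require Import Setoid.

Section Huntington.

Variables (B : Type) (meet : B -> B -> B) (c : B -> B).
Local Infix "⊓" := meet (at level 40, left associativity).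

Hypothesis meet_comm : forall x y, x ⊓ y = y ⊓ x.
Hypothesis meet_assoc : forall x y z, x ⊓ (y ⊓ z) = x ⊓ y ⊓ z.
Hypothesis huntington : forall x y, x = c (c x ⊓ y) ⊓ c (c x ⊓ c y).

Lemma huntington_absorb x y : x ⊓ c (c x ⊓ c (c y)) = x ⊓ c (c x ⊓ y).
Proof.
  rewrite (huntington x y) at 1.
  rewrite <- meet_assoc, <- (huntington x (c y)).
  apply meet_comm.
Qed.

Lemma meet_compl_compl x : c x ⊓ c (c x) = c x ⊓ x.
Proof.
  (* Expand [x] by the equation at [x''] and [x''] by the equation at [(x', x')];
     the two expansions agree after [huntington_absorb] at [(x', x')]. *)
  set (a := c x).
  rewrite (huntington x (c a)) at 1.
  rewrite (huntington (c a) a) at 1.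
  rewrite (meet_comm (c (c a)) a), (meet_comm (c (c a)) (c a)).
  rewrite (meet_comm (c (a ⊓ c (c a))) (c (c a ⊓ c (c a)))).
  rewrite meet_assoc, huntington_absorb, (meet_comm (c a) a).
  symmetry; apply meet_assoc.
Qed.

Lemma compl_eq_meet_compl x : c x = c (x ⊓ c x) ⊓ c (x ⊓ c (c x)).
Proof.
  rewrite (huntington (c x) x) at 1.
  rewrite (meet_comm (c (c x)) (c x)), meet_compl_compl.
  rewrite (meet_comm (c x) x), (meet_comm (c (c x)) x).
  apply meet_comm.
Qed.

Theorem huntington_compl_involutive x : c (c x) = x.
Proof.
  rewrite (compl_eq_meet_compl (c x)) at 1.
  symmetry; apply huntington.
Qed.

End Huntington.

Section CyclicHuntington.

Variables (B : Type) (meet : B -> B -> B) (c : B -> B).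
Local Infix "⊓" := meet (at level 40, left associativity).

Hypothesis meet_cycle : forall x y z, x ⊓ (y ⊓ z) = y ⊓ (z ⊓ x).
Hypothesis huntington : forall x y, x = c (c x ⊓ y) ⊓ c (c x ⊓ c y).

Lemma meet_factor_shift x p q v : p ⊓ q = x -> p ⊓ (q ⊓ v) = v ⊓ x.
Proof. intros <-; symmetry; apply meet_cycle. Qed.

Lemma meet_left_factor_comm x p q v : p ⊓ q = x -> v ⊓ p ⊓ x = x ⊓ (p ⊓ v).
Proof.
  intros Hx.
  rewrite <- (meet_factor_shift x p q (v ⊓ p) Hx), (meet_cycle q v p), Hx.
  symmetry; apply meet_cycle.
Qed.

Lemma meet_right_factor_swap x p q v : p ⊓ q = x -> q ⊓ v ⊓ x = v ⊓ q ⊓ x.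
Proof.
  intros Hx.
  rewrite <- (meet_factor_shift x p q (q ⊓ v) Hx).
  rewrite <- (meet_factor_shift x p q (v ⊓ q) Hx).
  now rewrite (meet_cycle q q v).
Qed.

(* [(x'∧y')'] is a right factor of [x] by the equation at [y], and a left factor
   by the equation at [y']. *)
Lemma huntington_factor_comm x y v :
  c (c x ⊓ c y) ⊓ v ⊓ x = x ⊓ (c (c x ⊓ c y) ⊓ v).
Proof.
  rewrite (meet_right_factor_swap x _ _ v (eq_sym (huntington x y))).
  exact (meet_left_factor_comm x _ _ v (eq_sym (huntington x (c y)))).
Qed.

Lemma huntington_term_compl x y :
  c (c x ⊓ y) = c (c x ⊓ c (c (c x ⊓ y) ⊓ c (c (c x ⊓ c y)))).
Proof.
  rewrite (huntington (c x ⊓ y) (c (c x ⊓ c y))) at 1.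
  now rewrite <- (huntington x y).
Qed.

Lemma huntington_term_comm x y v :
  c (c x ⊓ y) ⊓ v ⊓ x = x ⊓ (c (c x ⊓ y) ⊓ v).
Proof. rewrite (huntington_term_compl x y); apply huntington_factor_comm. Qed.

Lemma huntington_left_factor x w :
  w = c (c x ⊓ (c w ⊓ w)) ⊓ c (c w ⊓ c (w ⊓ c x)).
Proof. rewrite (meet_cycle (c x) (c w) w); apply huntington. Qed.

Theorem cyclic_huntington_meet_comm x y : x ⊓ y = y ⊓ x.
Proof. rewrite (huntington_left_factor y x); apply huntington_term_comm. Qed.

Lemma cyclic_huntington_meet_assoc x y z : x ⊓ (y ⊓ z) = x ⊓ y ⊓ z.
Proof.
  rewrite (cyclic_huntington_meet_comm (x ⊓ y) z).
  symmetry; apply meet_cycle.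
Qed.

End CyclicHuntington.

Theorem lemma4p24 (B : Type) (meet : B -> B -> B) (c : B -> B)
  (Hcyc : forall x y z : B, meet x (meet y z) = meet y (meet z x))
  (Hax : forall x y : B, x = meet (c (meet (c x) y)) (c (meet (c x) (c y)))) :
  forall x : B, c (c x) = x.
Proof.
  apply (huntington_compl_involutive B meet c).
  - exact (cyclic_huntington_meet_comm B meet c Hcyc Hax).
  - exact (cyclic_huntington_meet_assoc B meet c Hcyc Hax).
  - exact Hax.
Qed.
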